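(* Let $T$ be a text of length $n$ with suffix tree $\mathcal T$, and let $d=\lceil\log_2 n\rceil$. The total number of unique Weiner links in $\mathcal T$ is $O(n/d)$.
   Context: For a node $v$ of the suffix tree $\mathcal T$ whose root-to-node path spells $p$, and a symbol $c$ such that $cp$ occurs in $T$, the Weiner link $\mathrm{wlink}(v,c)$ goes from $v$ (its source) to the locus $u$ of $cp$ in $\mathcal T$. A Weiner link is heavy if its target node has at least $d$ leaf descendants, and light otherwise. A Weiner link $\mathrm{wlink}(v,c)$ is unique if $v$ is the source of at least $d+1$ Weiner links and $\mathrm{wlink}(v,c)$ is the only heavy Weiner link with source $v$. *)

From mathcomp Require Import all_boot.
Set Implicit Arguments. Unset Strict Implicit. Unset Printing Implicit Defensive.

(* Suffix tree of a text t (a sequence over an alphabet A : eqType), with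
   nodes identified with the strings spelled on their root-to-node paths:
   - the root (empty string),
   - internal branching nodes = right-maximal substrings,
   - leaves = the nonempty suffixes of t.
   (t is assumed to end with a unique terminator in the main statement, so
   that every nonempty suffix is a leaf.) *)
Section SuffixTree.
Variable A : eqType.
Implicit Types (t p q u v : seq A) (c : A).

Definition substrs t : seq (seq A) :=
  undup [seq take j (drop i t) | i <- iota 0 (size t).+1, j <- iota 0 (size t).+1].

Definition right_maximal t p : bool :=
  has (fun a => has (fun b => (a != b) && infix (rcons p a) t && infix (rcons p b) t)
                    (undup t)) (undup t).

Definition leaves t : seq (seq A) := [seq drop i t | i <- iota 0 (size t)].

Definition is_node t p : bool :=
  (p == [::]) || right_maximal t p || (p \in leaves t).

Definition leaf_desc t p : nat := count (fun w => prefix p w) (leaves t).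

(* the locus of q: the shallowest node whose path label has q as a prefix *)
Definition locus t q : seq A :=
  head q (sort (fun x y => size x <= size y)
               [seq u <- substrs t | is_node t u & prefix q u]).

Definition is_wlink t v c : bool := is_node t v && infix (c :: v) t.

Definition n_wlinks t v : nat := count (fun c => is_wlink t v c) (undup t).

Definition heavy_wlink t (d : nat) v c : bool :=
  is_wlink t v c && (d <= leaf_desc t (locus t (c :: v))).

Definition unique_wlink t (d : nat) v c : bool :=
  [&& is_wlink t v c, d.+1 <= n_wlinks t v, heavy_wlink t d v c &
      all (fun c' => heavy_wlink t d v c' ==> (c' == c)) (undup t)].

Definition num_unique_wlinks t (d : nat) : nat :=
  count (fun vc : seq A * A => unique_wlink t d vc.1 vc.2)
        [seq (v, c) | v <- substrs t, c <- undup t].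

End SuffixTree.

Definition has_terminator (A : eqType) (t : seq A) : Prop :=
  exists (s : seq A) (dollar : A), t = rcons s dollar /\ dollar \notin s.

From mathcomp Require Import all_boot.
From mathcomp Require Import zify.

Set Implicit Arguments. Unset Strict Implicit. Unset Printing Implicit Defensive.

(* A unique Weiner link has a source with at least d+1 Weiner links, i.e. with
   at least d+1 left extensions c v occurring in T, and each source carries at
   most one unique link.  Hence d times the number of unique links is at most
   the total left excess  sum_v (#left extensions of v - 1),  v ranging over
   the substrings of T.  Appending a symbol a to T raises the left excess by at
   most one: only a string v whose new left extension c v is a suffix of T a
   while v itself already occurs in T can gain, and such a v is the longest
   suffix of T a occurring in T.  So the left excess is at most n, and the
   number of unique links is at most n/d. *)

Lemma count_le1 (T : eqType) (P : pred T) (s : seq T) :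
  uniq s -> {in s &, forall x y, P x -> P y -> x = y} -> count P s <= 1.
Proof.
move=> us Puniq; rewrite -size_filter.
have [/hasP[x xs Px] | /hasPn noP] := boolP (has P s); last first.
  by rewrite (eq_in_filter (a2 := pred0)) ?filter_pred0 // => x /noP /negbTE.
apply: (@uniq_leq_size _ _ [:: x]); first exact: filter_uniq.
move=> y; rewrite mem_filter inE => /andP[Py ys].
by apply/eqP; exact: Puniq.
Qed.

Lemma count_le_predD (T : Type) (a1 a2 : pred T) (s : seq T) :
  count a2 s <= count a1 s + count (predD a2 a1) s.
Proof. by elim: s => //= x s IH; case: (a1 x); case: (a2 x) => /=; lia. Qed.

Lemma sumn_map_le_count (T : Type) (f f' : T -> nat) (g : pred T) (s : seq T) :
  (forall x, f' x <= f x + g x) ->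
  sumn (map f' s) <= sumn (map f s) + count g s.
Proof. by move=> le_f'; elim: s => //= x s IH; have := le_f' x; lia. Qed.

Section Suffixes.
Variable A : eqType.
Implicit Types s u : seq A.

Lemma suffix_of_suffixes u s1 s2 :
  suffix s1 u -> suffix s2 u -> size s1 <= size s2 -> suffix s1 s2.
Proof.
move=> s1u s2u le12; have := size_suffix s2u.
move: s1u s2u; rewrite !suffixE => /eqP <- /eqP <- le2u.
by rewrite drop_drop !size_drop; apply/eqP; congr drop; lia.
Qed.

Lemma suffixes_eq_size u s1 s2 :
  suffix s1 u -> suffix s2 u -> size s1 = size s2 -> s1 = s2.
Proof.
move=> s1u s2u e12; have := suffix_of_suffixes s1u s2u (eq_leq e12).
by rewrite suffixE e12 subnn drop0 => /eqP.
Qed.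

End Suffixes.

Section LeftExtensions.
Variables (A : eqType) (S : seq A).
Hypothesis S_uniq : uniq S.
Implicit Types (t v : seq A) (a c : A) (U : seq (seq A)).

Definition left_ext t v := count (fun c => infix (c :: v) t) S.

Definition left_excess t U := sumn [seq (left_ext t v).-1 | v <- U].

Definition new_left_ext t a v c := infix (c :: v) (rcons t a) && ~~ infix (c :: v) t.

Lemma new_left_ext_suffix t a v c :
  new_left_ext t a v c -> suffix (c :: v) (rcons t a).
Proof. by rewrite /new_left_ext infix_rconsl => /andP[/orP[// | ->]]. Qed.

Lemma new_left_ext_inj t a v c1 c2 :
  new_left_ext t a v c1 -> new_left_ext t a v c2 -> c1 = c2.
Proof.
move=> /new_left_ext_suffix s1 /new_left_ext_suffix s2.
by case: (suffixes_eq_size s1 s2 erefl).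
Qed.

Lemma left_ext_rcons t a v : left_ext (rcons t a) v <= left_ext t v + 1.
Proof.
apply: leq_trans (count_le_predD (fun c => infix (c :: v) t) _ _) _.
rewrite leq_add2l; apply: count_le1 => // c1 c2 _ _ n1 n2.
by apply: (@new_left_ext_inj t a v); rewrite /new_left_ext andbC.
Qed.

Lemma left_excess_grows t a v :
  (left_ext t v).-1 < (left_ext (rcons t a) v).-1 ->
  infix v t /\ exists c, new_left_ext t a v c.
Proof.
move=> grows; have := left_ext_rcons t a v; split.
  have : 0 < left_ext t v by lia.
  by rewrite /left_ext -has_count => /hasP[c _ /consl_infix].
have := count_le_predD (fun c => infix (c :: v) t)
                       (fun c => infix (c :: v) (rcons t a)) S.
rewrite -/(left_ext _ _) -/(left_ext _ _) => le_split.
have : 0 < count (predD (fun c => infix (c :: v) (rcons t a))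
                        (fun c => infix (c :: v) t)) S by lia.
by rewrite -has_count => /hasP[c _ /andP[nc ic]]; exists c; apply/andP.
Qed.

(* Two strings gaining a new left extension, both occurring in t, coincide:
   a strictly shorter one would have its new extension inside the longer. *)
Lemma new_left_ext_source_uniq t a v1 v2 c1 c2 :
  infix v1 t -> new_left_ext t a v1 c1 ->
  infix v2 t -> new_left_ext t a v2 c2 -> size v1 <= size v2 -> v1 = v2.
Proof.
move=> i1 n1 i2 n2 le12.
have s1 := new_left_ext_suffix n1; have s2 := new_left_ext_suffix n2.
have sv1 := suffix_trans (suffix_cons v1 c1) s1.
have sv2 := suffix_trans (suffix_cons v2 c2) s2.
have [lt12 | ge12] := ltnP (size v1) (size v2).
  have c1v1_v2 : suffix (c1 :: v1) v2 by apply: suffix_of_suffixes s1 sv2 _.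
  by move: n1; rewrite /new_left_ext (suffix_infix_trans c1v1_v2 i2) andbF.
by apply: suffixes_eq_size sv1 sv2 _; lia.
Qed.

Lemma left_excess_rcons t a U :
  uniq U -> left_excess (rcons t a) U <= left_excess t U + 1.
Proof.
move=> U_uniq; rewrite /left_excess.
pose grows v := (left_ext t v).-1 < (left_ext (rcons t a) v).-1.
apply: leq_trans (sumn_map_le_count (f := fun v => (left_ext t v).-1) (g := grows) U _) _.
  by move=> v; have := left_ext_rcons t a v; rewrite /grows -!subn1; case: ltnP; lia.
rewrite leq_add2l; apply: count_le1 => // v1 v2 _ _ g1 g2.
have [i1 [c1 n1]] := left_excess_grows g1; have [i2 [c2 n2]] := left_excess_grows g2.
have [le12 | lt21] := leqP (size v1) (size v2).
  exact: new_left_ext_source_uniq n1 i2 n2 le12.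
by symmetry; apply: new_left_ext_source_uniq n2 i1 n1 _; lia.
Qed.

Lemma left_excess_le_size t U : uniq U -> left_excess t U <= size t.
Proof.
move=> U_uniq; elim/last_ind: t => [|t a IH].
  have left_ext0 v : left_ext [::] v = 0.
    by rewrite /left_ext (eq_count (a2 := pred0)) ?count_pred0 // => c; rewrite infixs0.
  by rewrite /left_excess; elim: U {U_uniq} => //= v U; rewrite left_ext0 add0n.
by rewrite size_rcons; apply: leq_trans (left_excess_rcons t a U_uniq) _; rewrite addn1.
Qed.

End LeftExtensions.

Section UniqueLinks.
Variables (A : eqType) (t : seq A) (d : nat).

Lemma unique_wlinks_at_le v :
  count (unique_wlink t d v) (undup t) * d <= (left_ext (undup t) t v).-1.
Proof.
have at_most_one : count (unique_wlink t d v) (undup t) <= 1.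
  apply: count_le1 => [|c1 c2 _ c2t]; first exact: undup_uniq.
  move=> /and4P[_ _ _ /allP only_heavy] /and4P[_ _ heavy2 _].
  by have /implyP/(_ heavy2)/eqP := only_heavy c2 c2t.
have [-> // | some_unique] := posnP (count (unique_wlink t d v) (undup t)).
have /hasP[c _ /and4P[_ many_links _ _]] : has (unique_wlink t d v) (undup t).
  by rewrite has_count.
have : n_wlinks t v <= left_ext (undup t) t v by apply: sub_count => x /andP[].
have -> : count (unique_wlink t d v) (undup t) = 1 by lia.
lia.
Qed.

Lemma unique_wlinks_le_left_excess U :
  sumn [seq count (unique_wlink t d v) (undup t) | v <- U] * d <= left_excess (undup t) t U.
Proof.
elim: U => //= v U IH; rewrite mulnDl.
by apply: leq_add; first exact: unique_wlinks_at_le.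
Qed.

Lemma num_unique_wlinksE :
  num_unique_wlinks t d = sumn [seq count (unique_wlink t d v) (undup t) | v <- substrs t].
Proof.
rewrite /num_unique_wlinks; elim: (substrs t) => //= v U IH.
by rewrite count_cat count_map IH.
Qed.

End UniqueLinks.

Theorem proposition5 :
  exists C : nat, forall (A : eqType) (t : seq A),
    has_terminator t ->
    num_unique_wlinks t (up_log 2 (size t)) * up_log 2 (size t) <= C * size t.
Proof.
exists 1 => A t _; rewrite mul1n num_unique_wlinksE.
apply: leq_trans (unique_wlinks_le_left_excess _ _ _) _.
by apply: left_excess_le_size; exact: undup_uniq.
Qed.
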